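(* Let $N=\{1,\dots,n\}$, $\eta>0$, integers $B\ge1$, $Q\ge1$. Let $(A(k))_{k\ge0}$ be $n\times n$ matrices, let $x(0)\in\mathbb{R}^n$ have every component a multiple of $1/Q$, not all components equal, and define componentwise $x_i(k+1)=\lfloor\sum_{j=1}^n a_{ij}(k)x_j(k)\rfloor$, where $\lfloor\cdot\rfloor$ denotes rounding down to the nearest multiple of $1/Q$. Assume: (i) for every $k$, $A(k)$ is doubly stochastic with positive diagonal entries and every positive entry of $A(k)$ is at least $\eta$; (ii) for every integer $k\ge 0$, every permutation $\sigma$ of $N$ with $x_{\sigma(1)}(kB)\ge\cdots\ge x_{\sigma(n)}(kB)$, and every $d\in\{1,\dots,n-1\}$, either $x_{\sigma(d)}(kB)=x_{\sigma(d+1)}(kB)$, or there exist $t\in\{kB,\dots,(k+1)B-1\}$, $i\in\{\sigma(1),\dots,\sigma(d)\}$, $j\in\{\sigma(d+1),\dots,\sigma(n)\}$ such that $(i,j)$ or $(j,i)$ belongs to $\mathcal{E}(A(t))$. Then all $x_i(k)$ converge to a common limit $x_f$, and there is an absolute constant $c$ such that \[\Big|x_f-\frac1n\sum_{i=1}^n x_i(0)\Big|\le \frac{c}{Q}\,\frac{n^2}{\eta}\,B\log\big(Qn(U-L)\big),\] where $U=\max_i x_i(0)$ and $L=\min_i x_i(0)$.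
   Context: A matrix is doubly stochastic if it is nonnegative with all row and column sums equal to $1$. For a matrix $A=[a_{ij}]$, $\mathcal{E}(A)$ is the set of directed edges $(j,i)$ (including self-edges) with $a_{ij}>0$. *)

From HB Require Import structures.
From mathcomp Require Import all_boot all_order all_algebra perm.
From mathcomp Require Import all_classical all_reals all_analysis.
From mathcomp Require Import Rstruct Rstruct_topology.
From Stdlib Require Rdefinitions.
Notation R := Rdefinitions.R.
Set Implicit Arguments. Unset Strict Implicit. Unset Printing Implicit Defensive.
Import Order.TTheory GRing.Theory Num.Theory.
Local Open Scope ring_scope.

Definition doubly_stochastic (n : nat) (A : 'M[R]_n) : Prop :=
  (forall i j, 0 <= A i j) /\
  (forall i, \sum_(j < n) A i j = 1) /\
  (forall j, \sum_(i < n) A i j = 1).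

Definition in_edges (n : nat) (A : 'M[R]_n) (j i : 'I_n) : Prop := 0 < A i j.

Definition rdown (Q : nat) (y : R) : R := (Num.floor (Q%:R * y))%:~R / Q%:R.

(* Measure disagreement by the potential sum_i (x_i - m)^2, where m is the minimum of
   x at the start of a window of B steps.  Rounding down never takes a value below the
   grid point m and never above the unrounded average, so each step decreases the
   potential by at least the weighted variance sum_i sum_j a_ij (x_j - y_i)^2 of the
   averages y.  Sort the values at the start of the window; each gap between consecutive
   values is crossed by an edge during the window, and at the first such crossing the
   crossing row still sees neighbours on both sides of the gap, so its variance is at
   least eta/2 times the square of the gap (charged gaps of one row telescope).  Summing
   and using Cauchy-Schwarz, one window multiplies the potential by 1 - eta/(2n^2).
   After O((n^2/eta) log(Qn(U-L))) windows the potential is below 1/Q^2, which on the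
   grid forces consensus; since each step loses at most n/Q of the total mass, the
   consensus value is within (number of steps)/Q of the initial average. *)
From HB Require Import structures.
From mathcomp Require Import all_boot all_order all_algebra perm.
From mathcomp Require Import all_classical all_reals all_analysis.
From mathcomp Require Import Rstruct Rstruct_topology.
From mathcomp Require Import ring lra.
Set Implicit Arguments.
Unset Strict Implicit.
Unset Printing Implicit Defensive.
Import Order.TTheory GRing.Theory Num.Theory.
Local Open Scope classical_set_scope.
Local Open Scope ring_scope.

Lemma exists_sorting_perm disp (T : orderType disp) m (f : 'I_m -> T) :
  exists s : {perm 'I_m}, forall a b : 'I_m, (a <= b)%N -> (f (s b) <= f (s a))%O.
Proof.
case: m f => [|m] f; first by exists 1%g => [[]].
pose leT i j := (f j <= f i)%O.
have leT_total : total leT by move=> i j; rewrite /leT le_total.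
have leT_trans : transitive leT by move=> j i k /[swap]; apply: le_trans.
pose r := sort leT (enum 'I_m.+1).
have size_r : size r = m.+1 by rewrite size_sort size_enum_ord.
have r_uniq : uniq r by rewrite sort_uniq enum_uniq.
pose g (a : 'I_m.+1) := nth ord0 r a.
have g_inj : injective g.
  by move=> a b /eqP; rewrite /g nth_uniq ?size_r // => /eqP /val_inj.
exists (perm g_inj) => a b le_ab; rewrite !permE.
have := sorted_leq_nth leT_trans (fun i => le_refl (f i)) ord0 (sort_sorted leT_total _).
by apply; rewrite ?inE ?size_r.
Qed.

Lemma ord_neq_gt0 m (i j : 'I_m.+1) : i != j -> (0 < m)%N.
Proof. by case: m i j => [|m] i j //; rewrite (ord1 i) (ord1 j) eqxx. Qed.

Section RealDomainFacts.
Variable F : realDomainType.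

Lemma sum_gaps_within m (v : nat -> F) lo hi :
  (forall k, (k < m)%N -> v k.+1 <= v k) -> lo <= hi ->
  \sum_(a < m | (lo <= v a.+1) && (v a <= hi)) (v a - v a.+1) <= hi - lo.
Proof.
move=> v_noninc le_lohi.
suff bound k : (k <= m)%N ->
    \sum_(a < k | (lo <= v a.+1) && (v a <= hi)) (v a - v a.+1)
      <= Num.max 0 (hi - Num.max lo (v k)).
  apply: le_trans (bound m (leqnn m)) _.
  by case: (leP lo (v m)) => h1; [case: (leP 0 (hi - v m)) | case: (leP 0 (hi - lo))] => h2; lra.
elim: k => [|k IHk] lt_km; first by rewrite big_ord0 le_max lexx.
rewrite big_mkcond big_ord_recr /= -big_mkcond /=.
have vk := v_noninc k lt_km; move: (IHk (ltnW lt_km)) => {IHk}.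
case: ifP => [/andP [lo_vk1 vk_hi]|_].
  rewrite (max_r (le_trans lo_vk1 vk)) (max_r lo_vk1).
  by case: (leP 0 (hi - v k)) => h1; case: (leP 0 (hi - v k.+1)) => h2; lra.
rewrite addr0 => IHk; apply: le_trans IHk _; apply: le_max2 => //.
by rewrite lerD2l lerN2; apply: le_max2.
Qed.

Lemma sqr_sum_le m (g : 'I_m -> F) :
  (\sum_(i < m) g i) ^+ 2 <= m%:R * \sum_(i < m) g i ^+ 2.
Proof.
case: m g => [|m] g; first by rewrite !big_ord0 expr0n /= mul0r.
set S := \sum_(i < _) g i; set T := \sum_(i < _) g i ^+ 2.
have sum_sq_ge0 : 0 <= \sum_(i < m.+1) (m.+1%:R * g i - S) ^+ 2.
  by apply: sumr_ge0 => i _; exact: sqr_ge0.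
have sum_sq_eq : \sum_(i < m.+1) (m.+1%:R * g i - S) ^+ 2 =
    m.+1%:R * (m.+1%:R * T - S ^+ 2).
  rewrite (eq_bigr (fun i => m.+1%:R ^+ 2 * g i ^+ 2 - 2 * m.+1%:R * S * g i + S ^+ 2));
    last by move=> i _; ring.
  rewrite big_split sumrB -!mulr_sumr sumr_const card_ord -/S -/T -[S *+ _]mulr_natr /=; ring.
rewrite sum_sq_eq in sum_sq_ge0.
by move: sum_sq_ge0; rewrite pmulr_rge0 ?ltr0n // subr_ge0.
Qed.

Lemma telescope_ord m (v : nat -> F) : \sum_(a < m) (v a - v a.+1) = v 0%N - v m.
Proof.
elim: m => [|m IHm]; first by rewrite big_ord0 subrr.
by rewrite big_ord_recr /= IHm; ring.
Qed.

End RealDomainFacts.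

Lemma dist_mean_le (F : realFieldType) (m S w t q : F) : 0 < m -> 0 < q -> 0 <= t ->
  m * w <= S -> S - t * (m / q) <= m * w -> `|w - S / m| <= t / q.
Proof.
move=> m_gt0 q_gt0 t_ge0 le_mw le_S.
have -> : w - S / m = (m * w - S) / m by field; rewrite gt_eqF.
have : 0 <= t / q * m by rewrite mulr_ge0 // ?divr_ge0 // ltW.
have tqm : t * (m / q) = t / q * m by ring.
by rewrite tqm in le_S; rewrite ler_norml ler_pdivlMr // ler_pdivrMr //; lra.
Qed.

Section RealTypeFacts.
Variable F : realType.

Lemma exists_nat_between (r : F) : 1 <= r -> exists K : nat, 2 * r < K%:R <= 3 * r.
Proof.
move=> r_ge1; have r2_ge0 : 0 <= 2 * r by lra.
exists (Num.truncn (2 * r)).+1; rewrite truncnS_gt /= -natr1.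
by case/andP: (truncn_itv r2_ge0) => ? _; lra.
Qed.

Lemma expr_1B_le_expR (a : F) (K : nat) :
  0 <= a <= 1 -> (1 - a) ^+ K <= expR (- (K%:R * a)).
Proof.
case/andP=> a_ge0 a_le1; rewrite -mulrN expRM_natl.
by apply: lerXn2r; rewrite ?nnegrE ?expR_ge0 //; [lra | have := expR_ge1Dx (- a); lra].
Qed.

Lemma ln_ge_half (z : F) : 2 <= z -> 1 / 2 <= ln z.
Proof.
move=> z_ge2; have z_gt0 : 0 < z by lra.
have := expR_ge1Dx (- ln z); rewrite expRN lnK ?posrE //.
have : z^-1 <= 2^-1 by rewrite lef_pV2 ?posrE //; lra.
lra.
Qed.

Lemma ln_mul_sqr_le (m d : F) : 1 <= m -> 1 <= d -> ln (m * d ^+ 2) <= 2 * ln (m * d).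
Proof.
move=> m_ge1 d_ge1; have m_pos : m \is Num.pos by rewrite posrE; lra.
have d_pos : d \is Num.pos by rewrite posrE; lra.
have md_pos : m * d \is Num.pos by rewrite posrE; nra.
rewrite expr2 mulrA lnM //.
have : ln d <= ln (m * d) by rewrite ler_ln //; nra.
lra.
Qed.

End RealTypeFacts.

Section QuantizedConsensus.
Variable Q : nat.
Hypothesis Q_gt0 : (0 < Q)%N.

Let Q_gt0R : 0 < (Q%:R : R).
Proof. by rewrite ltr0n. Qed.

Definition on_grid (v : R) := exists z : int, v = z%:~R / Q%:R.

Lemma rdown_le y : rdown Q y <= y.
Proof. by rewrite /rdown ler_pdivrMr // mulrC floor_le. Qed.

Lemma rdown_gt y : y - Q%:R^-1 < rdown Q y.
Proof.
rewrite /rdown ltr_pdivlMr // mulrBl mulVf ?gt_eqF // mulrC ltrBlDr.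
by have := floorD1_gt (Q%:R * y); rewrite intrD.
Qed.

Lemma rdown_on_grid y : on_grid (rdown Q y).
Proof. by exists (Num.floor (Q%:R * y)). Qed.

Lemma rdown_id v : on_grid v -> rdown Q v = v.
Proof. by move=> [z ->]; rewrite /rdown [Q%:R * _]mulrC divfK ?gt_eqF // intrKfloor. Qed.

Lemma rdown_ge c y : on_grid c -> c <= y -> c <= rdown Q y.
Proof.
move=> c_grid le_cy; rewrite -(rdown_id c_grid) /rdown ler_pM2r ?invr_gt0 //.
by rewrite ler_int le_floor // ler_pM2l.
Qed.

Lemma on_grid_lt u v : on_grid u -> on_grid v -> u < v -> u + Q%:R^-1 <= v.
Proof.
move=> [a ->] [b ->]; rewrite ltr_pM2r ?invr_gt0 // ltr_int -lezD1 -(ler_int R) intrD.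
have Qinv_ge0 : 0 <= (Q%:R : R)^-1 by rewrite invr_ge0 ltW.
by move=> /(ler_wpM2r Qinv_ge0); rewrite mulrDl mul1r.
Qed.

Lemma on_grid_gap_ge u v : on_grid u -> on_grid v -> u < v -> 1 <= Q%:R * (v - u).
Proof.
move=> u_grid v_grid /(on_grid_lt u_grid v_grid) le_uv.
have : Q%:R * Q%:R^-1 <= Q%:R * (v - u) by apply: ler_wpM2l; [exact: ltW | lra].
by rewrite divff ?gt_eqF.
Qed.

Section Dynamics.
Variables (n' : nat) (eta : R) (B : nat).
Local Notation n := n'.+1.
Variables (A : nat -> 'M[R]_n) (x : nat -> 'I_n -> R).
Hypothesis eta_gt0 : 0 < eta.
Hypothesis x0_on_grid : forall i, on_grid (x 0%N i).
Hypothesis x_step : forall k i, x k.+1 i = rdown Q (\sum_(j < n) A k i j * x k j).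
Hypothesis A_ds : forall k, doubly_stochastic (A k).
Hypothesis A_diag_gt0 : forall k i, 0 < A k i i.
Hypothesis A_ge_eta : forall k i j, 0 < A k i j -> eta <= A k i j.

Definition mix k i := \sum_(j < n) A k i j * x k j.

Lemma A_ge0 k i j : 0 <= A k i j.
Proof. by case: (A_ds k). Qed.

Lemma A_row_sum k i : \sum_(j < n) A k i j = 1.
Proof. by case: (A_ds k) => _ []. Qed.

Lemma A_col_sum k j : \sum_(i < n) A k i j = 1.
Proof. by case: (A_ds k) => _ []. Qed.

Lemma x_on_grid k i : on_grid (x k i).
Proof. by case: k => [|k]; [exact: x0_on_grid | rewrite x_step; exact: rdown_on_grid]. Qed.

Lemma mix_ge c k i : (forall j, 0 < A k i j -> c <= x k j) -> c <= mix k i.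
Proof.
move=> le_cx; rewrite -[c]mul1r -(@A_row_sum k i) mulr_suml; apply: ler_sum => j _.
have := @A_ge0 k i j; rewrite le_eqVlt => /predU1P [<-|Aij_gt0]; first by rewrite !mul0r.
by apply: ler_wpM2l; [exact: A_ge0 | exact: le_cx].
Qed.

Lemma mix_le c k i : (forall j, 0 < A k i j -> x k j <= c) -> mix k i <= c.
Proof.
move=> le_xc; rewrite -[c]mul1r -(@A_row_sum k i) mulr_suml; apply: ler_sum => j _.
have := @A_ge0 k i j; rewrite le_eqVlt => /predU1P [<-|Aij_gt0]; first by rewrite !mul0r.
by apply: ler_wpM2l; [exact: A_ge0 | exact: le_xc].
Qed.

Lemma x_ge_iter c t0 : on_grid c -> (forall i, c <= x t0 i) ->
  forall d i, c <= x (t0 + d) i.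
Proof.
move=> c_grid le_cx; elim=> [|d IHd] i; first by rewrite addn0.
by rewrite addnS x_step; apply: rdown_ge => //; apply: mix_ge => j _.
Qed.

Lemma sum_mix k : \sum_(i < n) mix k i = \sum_(j < n) x k j.
Proof.
rewrite exchange_big /=; apply: eq_bigr => j _.
by rewrite -mulr_suml A_col_sum mul1r.
Qed.

Lemma sum_x_step k : \sum_(i < n) x k.+1 i <= \sum_(i < n) x k i /\
   \sum_(i < n) x k i - n%:R / Q%:R <= \sum_(i < n) x k.+1 i.
Proof.
rewrite -(sum_mix k); split; first by apply: ler_sum => i _; rewrite x_step rdown_le.
have -> : n%:R / Q%:R = \sum_(i < n) Q%:R^-1 :> R by rewrite sumr_const card_ord mulr_natl.
rewrite -sumrB; apply: ler_sum => i _.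
by rewrite x_step ltW // rdown_gt.
Qed.

Lemma sum_x_iter d : \sum_(i < n) x d i <= \sum_(i < n) x 0%N i /\
  \sum_(i < n) x 0%N i - d%:R * (n%:R / Q%:R) <= \sum_(i < n) x d i.
Proof.
elim: d => [|d [IH1 IH2]]; first by rewrite mul0r subr0.
have [le_step ge_step] := sum_x_step d; split; first exact: le_trans le_step IH1.
by rewrite -natr1 mulrDl mul1r; lra.
Qed.

Definition potential c k := \sum_(i < n) (x k i - c) ^+ 2.
Definition row_variance k i := \sum_(j < n) A k i j * (x k j - mix k i) ^+ 2.
Definition variance k := \sum_(i < n) row_variance k i.

(* Bias-variance decomposition of the weighted second moment around c. *)
Lemma sqr_mix_sub k c i :
  (mix k i - c) ^+ 2 = \sum_(j < n) A k i j * (x k j - c) ^+ 2 - row_variance k i.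
Proof.
rewrite /row_variance -sumrB.
have -> : \sum_(j < n) (A k i j * (x k j - c) ^+ 2 - A k i j * (x k j - mix k i) ^+ 2) =
    \sum_(j < n) ((mix k i - c) * (2 * (A k i j * x k j))
      - (mix k i - c) * ((c + mix k i) * A k i j)).
  by apply: eq_bigr => j _; ring.
by rewrite sumrB -!mulr_sumr A_row_sum -/(mix k i); ring.
Qed.

Lemma potential_step k c : (forall i, c <= x k.+1 i) ->
  potential c k.+1 <= potential c k - variance k.
Proof.
move=> le_cx.
apply: (@le_trans _ _ (\sum_(i < n) (mix k i - c) ^+ 2)).
  apply: ler_sum => i _; have := le_cx i; have : x k.+1 i <= mix k i.
    by rewrite x_step rdown_le.
  by move=> ? ?; apply: lerXn2r; rewrite ?nnegrE; lra.
under eq_bigr do rewrite sqr_mix_sub.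
rewrite sumrB exchange_big /=.
suff -> : \sum_(j < n) \sum_(i < n) A k i j * (x k j - c) ^+ 2 = potential c k by [].
by apply: eq_bigr => j _; rewrite -mulr_suml A_col_sum mul1r.
Qed.

Lemma potential_iter c t0 : on_grid c -> (forall i, c <= x t0 i) ->
  forall d, potential c (t0 + d) <= potential c t0 - \sum_(u < d) variance (t0 + u).
Proof.
move=> c_grid le_cx; elim=> [|d IHd]; first by rewrite addn0 big_ord0 subr0.
rewrite big_ord_recr /= addnS.
have := @potential_step (t0 + d) c; rewrite -addnS => /(_ (x_ge_iter c_grid le_cx _)).
lra.
Qed.

Lemma row_variance_ge k i j1 j2 : 0 < A k i j1 -> 0 < A k i j2 ->
  eta / 2 * (x k j1 - x k j2) ^+ 2 <= row_variance k i.
Proof.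
move=> Aij1_gt0 Aij2_gt0; have [<-|neq_j] := eqVneq j1 j2.
  rewrite subrr expr0n /= mulr0; apply: sumr_ge0 => j _.
  by rewrite mulr_ge0 ?A_ge0 ?sqr_ge0.
rewrite /row_variance (bigD1 j1) //= (bigD1 j2) /=; last by rewrite eq_sym.
set r := \sum_(j < n | _) _.
have r_ge0 : 0 <= r by apply: sumr_ge0 => j _; rewrite mulr_ge0 ?A_ge0 ?sqr_ge0.
set a := x k j1 - mix k i; set b := x k j2 - mix k i.
have -> : x k j1 - x k j2 = a - b by rewrite /a /b; ring.
have := ler_wpM2r (sqr_ge0 a) (A_ge_eta Aij1_gt0).
have := ler_wpM2r (sqr_ge0 b) (A_ge_eta Aij2_gt0).
have : 0 <= eta * (a + b) ^+ 2 by rewrite mulr_ge0 ?sqr_ge0 // ltW.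
nra.
Qed.

Definition rate := eta / (2 * n%:R ^+ 2).

Section Window.
Variables (t0 : nat) (s : {perm 'I_n}).
Hypothesis x_sorted : forall a b : 'I_n, (a <= b)%N -> x t0 (s b) <= x t0 (s a).
Hypothesis gap_crossed : forall a b : 'I_n, nat_of_ord b = a.+1 ->
  x t0 (s a) = x t0 (s b) \/
  exists t : nat, [/\ (t0 <= t)%N, (t < t0 + B)%N &
    exists p q : 'I_n, [/\ (p <= a)%N, (b <= q)%N &
      in_edges (A t) (s p) (s q) \/ in_edges (A t) (s q) (s p)]].

Definition xs (a : nat) := x t0 (s (inord a)).

Definition separates (a : nat) (p q : 'I_n) := (p <= a)%N != (q <= a)%N.
Definition row_crosses t (p : 'I_n) a :=
  [exists q : 'I_n, (0 < A t (s p) (s q)) && separates a p q].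
Definition cut_crossed t a := [exists p : 'I_n, row_crosses t p a].

Lemma xs_noninc k : (k < n')%N -> xs k.+1 <= xs k.
Proof. by move=> lt_kn; apply: x_sorted; rewrite !inordK // ltnW. Qed.

Lemma uncrossed_cut_bounds a d : (a < n')%N ->
  (forall d', (d' < d)%N -> ~~ cut_crossed (t0 + d') a) ->
  forall p : 'I_n, ((p <= a)%N -> xs a <= x (t0 + d) (s p)) /\
                   ((a < p)%N -> x (t0 + d) (s p) <= xs a.+1).
Proof.
move=> lt_an'; elim: d => [|d IHd] uncrossed p.
  by rewrite addn0; split => lt_pa; apply: x_sorted; rewrite inordK // ltnW.
have {}IHd := IHd (fun d' lt_d'd => uncrossed d' (ltnW lt_d'd)).
have same_side q : 0 < A (t0 + d) (s p) (s q) -> (p <= a)%N = (q <= a)%N.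
  move=> Apq_gt0; suff : ~~ separates a p q by rewrite negbK => /eqP.
  apply: contra (uncrossed d (ltnSn d)) => sep.
  by apply/existsP; exists p; apply/existsP; exists q; rewrite Apq_gt0.
rewrite addnS x_step; split => side_p.
  apply: rdown_ge; first exact: x_on_grid.
  apply: mix_ge => j; rewrite -(permKV s j) => Apj_gt0.
  by apply: (IHd _).1; rewrite -(same_side _ Apj_gt0).
apply: le_trans; first exact: rdown_le.
apply: mix_le => j; rewrite -(permKV s j) => Apj_gt0.
by apply: (IHd _).2; rewrite ltnNge -(same_side _ Apj_gt0) -ltnNge.
Qed.

Definition charged (u : 'I_B) p a :=
  row_crosses (t0 + u) p a && [forall u' : 'I_B, (u' < u)%N ==> ~~ cut_crossed (t0 + u') a].

Lemma charged_support (u : 'I_B) p (a : nat) : (a < n')%N -> charged u p a ->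
  exists j1 j2, [/\ 0 < A (t0 + u) (s p) j1, 0 < A (t0 + u) (s p) j2,
     xs a <= x (t0 + u) j1 & x (t0 + u) j2 <= xs a.+1].
Proof.
move=> lt_an' /andP [/existsP [q /andP [Apq_gt0 sep]] /forallP first_u].
have uncrossed d' : (d' < u)%N -> ~~ cut_crossed (t0 + d') a.
  move=> lt_d'u; have lt_d'B : (d' < B)%N by apply: ltn_trans lt_d'u (ltn_ord u).
  by have := first_u (Ordinal lt_d'B); rewrite /= lt_d'u.
have bounds := uncrossed_cut_bounds lt_an' uncrossed.
move: sep; rewrite /separates; case: (leqP p a) => p_a; case: (leqP q a) => q_a //= _.
  by exists (s p), (s q); split; [exact: A_diag_gt0 | | exact: (bounds p).1 | exact: (bounds q).2].
by exists (s q), (s p); split; [| exact: A_diag_gt0 | exact: (bounds q).1 | exact: (bounds p).2].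
Qed.

Lemma charged_gaps_le (u : 'I_B) p :
  \sum_(a < n' | charged u p a) (xs a - xs a.+1) ^+ 2
    <= 2 / eta * row_variance (t0 + u) (s p).
Proof.
set tau := (t0 + u)%N; set i := s p.
have Aii_gt0 : 0 < A tau i i by exact: A_diag_gt0.
case: (@arg_maxP _ _ _ i (fun j => 0 < A tau i j) (x tau) Aii_gt0) => j1 Aij1_gt0 max_j1.
case: (@arg_minP _ _ _ i (fun j => 0 < A tau i j) (x tau) Aii_gt0) => j2 Aij2_gt0 min_j2.
set hi := x tau j1; set lo := x tau j2.
have le_lohi : lo <= hi by apply: le_trans (min_j2 _ Aii_gt0) (max_j1 _ Aii_gt0).
apply: (@le_trans _ _ ((hi - lo) ^+ 2)); last first.
  rewrite -ler_pdivrMl ?divr_gt0 // invf_div.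
  exact: row_variance_ge Aij1_gt0 Aij2_gt0.
have gap_within (a : 'I_n') : charged u p a -> (lo <= xs a.+1) && (xs a <= hi).
  move=> /(charged_support (ltn_ord a)) [k1 [k2 [Aik1_gt0 Aik2_gt0 le_k1 le_k2]]].
  by rewrite (le_trans (min_j2 _ Aik2_gt0) le_k2) (le_trans le_k1 (max_j1 _ Aik1_gt0)).
apply: (@le_trans _ _ (\sum_(a < n' | charged u p a) (hi - lo) * (xs a - xs a.+1))).
  apply: ler_sum => a charged_a; have /andP [? ?] := gap_within a charged_a.
  by rewrite expr2 ler_wpM2r; have := xs_noninc (ltn_ord a); lra.
rewrite -mulr_sumr expr2 ler_wpM2l ?subr_ge0 //.
apply: le_trans (sum_gaps_within xs_noninc le_lohi).
rewrite [X in _ <= X]big_mkcond [X in X <= _]big_mkcond; apply: ler_sum => a _.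
case: ifP => charged_a; first by rewrite gap_within.
by case: ifP => // _; have := xs_noninc (ltn_ord a); lra.
Qed.

Lemma gap_charged (a : 'I_n') : xs a != xs a.+1 -> exists (u : 'I_B) p, charged u p a.
Proof.
move=> neq_gap; have lt_an : (a < n)%N by apply: ltn_trans (ltn_ord a) _.
have lt_a1n : (a.+1 < n)%N by rewrite ltnS.
have := @gap_crossed (inord a) (inord a.+1); rewrite !inordK // => /(_ erefl).
case=> [eq_gap | [t [le_t0t lt_tB [p [q [p_a q_a edge]]]]]].
  by rewrite /xs eq_gap eqxx in neq_gap.
have crossed_t : cut_crossed t a.
  have q_a' : (q <= a)%N = false by rewrite leqNgt q_a.
  by case: edge => edge; apply/existsP; [exists q | exists p]; apply/existsP;
    [exists p | exists q]; rewrite edge /separates q_a' p_a.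
have ex_u : exists u, (u < B)%N && cut_crossed (t0 + u) a.
  by exists (t - t0)%N; rewrite subnKC // crossed_t andbT ltn_subLR.
case: (ex_minnP ex_u) => m /andP [lt_mB /existsP [p0 crossed_m]] min_m.
exists (Ordinal lt_mB), p0; rewrite /charged crossed_m /=.
apply/forallP => u'; apply/implyP => lt_u'm; apply/negP => crossed_u'.
by have := min_m u'; rewrite ltn_ord crossed_u' leqNgt lt_u'm => /(_ isT).
Qed.

Lemma sum_gaps_le_charged : \sum_(a < n') (xs a - xs a.+1) ^+ 2 <=
  \sum_(u < B) \sum_(p < n) \sum_(a < n' | charged u p a) (xs a - xs a.+1) ^+ 2.
Proof.
pose G u p (a : 'I_n') := if charged u p a then (xs a - xs a.+1) ^+ 2 else 0.
have G_ge0 u p a : 0 <= G u p a by rewrite /G; case: ifP => // _; exact: sqr_ge0.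
have -> : \sum_(u < B) \sum_(p < n) \sum_(a < n' | charged u p a) (xs a - xs a.+1) ^+ 2
    = \sum_(a < n') \sum_(u < B) \sum_(p < n) G u p a.
  rewrite [RHS]exchange_big; apply: eq_bigr => u _ /=.
  by rewrite exchange_big; apply: eq_bigr => p _; rewrite big_mkcond.
apply: ler_sum => a _ /=.
have [eq_gap|neq_gap] := eqVneq (xs a) (xs a.+1).
  by rewrite eq_gap subrr expr0n sumr_ge0 // => u _; rewrite sumr_ge0.
case: (gap_charged neq_gap) => u [p charged_upa].
rewrite (bigD1 u) //= (bigD1 p) //= {1}/G charged_upa -addrA lerDl.
by rewrite addr_ge0 ?sumr_ge0 // => *; rewrite ?sumr_ge0.
Qed.

Lemma window_variance_ge :
  eta / 2 * \sum_(a < n') (xs a - xs a.+1) ^+ 2 <= \sum_(u < B) variance (t0 + u).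
Proof.
rewrite -ler_pdivlMl ?divr_gt0 // invf_div.
apply: le_trans sum_gaps_le_charged _; rewrite mulr_sumr; apply: ler_sum => u _.
rewrite /variance [\sum_(i < n) row_variance _ _](reindex_inj (@perm_inj _ s)) /= mulr_sumr.
by apply: ler_sum => p _; exact: charged_gaps_le.
Qed.

Lemma xs_last_le i : xs n' <= x t0 i.
Proof. by rewrite -(permKV s i); apply: x_sorted; rewrite inordK // -ltnS. Qed.

Lemma le_xs_first i : x t0 i <= xs 0%N.
Proof. by rewrite -(permKV s i); apply: x_sorted; rewrite inordK. Qed.

Lemma potential_le_gaps :
  potential (xs n') t0 <= n%:R ^+ 2 * \sum_(a < n') (xs a - xs a.+1) ^+ 2.
Proof.
set S2 := \sum_(a < n') _.
have range_le : (xs 0%N - xs n') ^+ 2 <= n'%:R * S2.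
  by have := sqr_sum_le (fun a : 'I_n' => xs a - xs a.+1); rewrite /= telescope_ord.
apply: (@le_trans _ _ (\sum_(i < n) (xs 0%N - xs n') ^+ 2)).
  apply: ler_sum => i _; have := xs_last_le i; have := le_xs_first i.
  by move=> ? ?; apply: lerXn2r; rewrite ?nnegrE; lra.
rewrite sumr_const card_ord -[_ *+ n]mulr_natl.
apply: le_trans (ler_wpM2l (ler0n _ n) range_le) _.
rewrite mulrA; apply: ler_wpM2r; first by apply: sumr_ge0 => a _; exact: sqr_ge0.
by rewrite expr2; apply: ler_wpM2l => //; rewrite ler_nat.
Qed.

Lemma window_contraction :
  potential (xs n') (t0 + B) <= (1 - rate) * potential (xs n') t0.
Proof.
have := potential_iter (@x_on_grid _ _) xs_last_le B.
have := window_variance_ge; have := potential_le_gaps.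
set S2 := \sum_(a < n') _.
have rate_mul : rate * (n%:R ^+ 2 * S2) = eta / 2 * S2.
  by rewrite /rate; field; rewrite addrC natr1 pnatr_eq0.
have rate_ge0 : 0 <= rate by rewrite divr_ge0 // ltW.
by move=> /(ler_wpM2l rate_ge0); rewrite rate_mul; lra.
Qed.

End Window.

Hypothesis gap_crossed : forall (k : nat) (s : {perm 'I_n}),
  (forall a b : 'I_n, (a <= b)%N -> x (k * B)%N (s b) <= x (k * B)%N (s a)) ->
  forall a b : 'I_n, nat_of_ord b = a.+1 ->
    x (k * B)%N (s a) = x (k * B)%N (s b) \/
    exists t : nat, [/\ (k * B <= t)%N, (t < k.+1 * B)%N &
      exists p q : 'I_n, [/\ (p <= a)%N, (b <= q)%N &
        in_edges (A t) (s p) (s q) \/ in_edges (A t) (s q) (s p)]].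

Definition xmin t := x t (Order.arg_min (@ord0 n') xpredT (x t)).

Lemma xmin_le t i : xmin t <= x t i.
Proof. by rewrite /xmin; case: (@arg_minP _ _ _ ord0 xpredT (x t)) => // j _; apply. Qed.

Definition window_potential k := potential (xmin (k * B)) (k * B).

Lemma potential_le_shift c1 c2 t : c1 <= c2 -> (forall i, c2 <= x t i) ->
  potential c2 t <= potential c1 t.
Proof.
move=> le_c12 le_c2x; apply: ler_sum => i _; have := le_c2x i.
by move=> ?; apply: lerXn2r; rewrite ?nnegrE; lra.
Qed.

Lemma window_potential_step k : window_potential k.+1 <= (1 - rate) * window_potential k.
Proof.
set t0 := (k * B)%N.
have [s x_sorted] := exists_sorting_perm (x t0).
have := @gap_crossed k s x_sorted; rewrite mulSn addnC -/t0 => crossed.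
have xs_last : xs t0 s n' = xmin t0.
  apply: le_anti; rewrite xmin_le andbT /xs /xmin -(permKV s (Order.arg_min _ _ _)).
  by apply: x_sorted; rewrite inordK // -ltnS.
rewrite /window_potential mulSn addnC -/t0.
have := window_contraction x_sorted crossed; rewrite xs_last => contraction.
apply: le_trans contraction.
apply: potential_le_shift; last exact: xmin_le.
exact: x_ge_iter (@x_on_grid _ _) (@xmin_le t0) B _.
Qed.

Lemma eta_le1 : eta <= 1.
Proof.
apply: le_trans (A_ge_eta (A_diag_gt0 0%N ord0)) _.
rewrite -(@A_row_sum 0%N ord0) (bigD1 ord0) //= lerDl.
by apply: sumr_ge0 => j _; exact: A_ge0.
Qed.

Lemma rate_itv : 0 <= rate <= 1.
Proof.
have n2_ge1 : 1 <= n%:R ^+ 2 :> R by rewrite exprn_ege1 // ler1n.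
have two_n2_gt0 : 0 < 2 * n%:R ^+ 2 :> R by lra.
apply/andP; split; first by rewrite divr_ge0 // ltW.
by rewrite ler_pdivrMr // mul1r; have := eta_le1; lra.
Qed.

Lemma window_potential_iter k : window_potential k <= (1 - rate) ^+ k * window_potential 0%N.
Proof.
elim: k => [|k IHk]; first by rewrite expr0 mul1r.
apply: le_trans (window_potential_step k) _; rewrite exprS -mulrA ler_wpM2l //.
by case/andP: rate_itv; lra.
Qed.

Lemma window_potential_small K (U L : R) :
  (forall i, x 0%N i <= U) -> (forall i, L <= x 0%N i) -> (exists i, x 0%N i = L) ->
  L < U -> ln (n%:R * (Q%:R * (U - L)) ^+ 2) < K%:R * rate ->
  window_potential K < Q%:R^-1 ^+ 2.
Proof.
move=> le_xU le_Lx [iL eL] lt_LU ln_lt.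
set M := n%:R * (Q%:R * (U - L)) ^+ 2 in ln_lt.
have n_gt0 : 0 < n%:R :> R by rewrite ltr0n.
have UL_gt0 : 0 < U - L by rewrite subr_gt0.
have bound0_gt0 : 0 < n%:R * (U - L) ^+ 2 by rewrite mulr_gt0 ?exprn_gt0.
have M_gt0 : 0 < M by rewrite mulr_gt0 ?exprn_gt0 ?mulr_gt0.
have pot0_le : window_potential 0%N <= n%:R * (U - L) ^+ 2.
  rewrite /window_potential mul0n.
  have -> : xmin 0%N = L by apply: le_anti; rewrite -{1}eL xmin_le le_Lx.
  apply: (@le_trans _ _ (\sum_(i < n) (U - L) ^+ 2)).
    apply: ler_sum => i _; have := le_Lx i; have := le_xU i.
    by move=> ? ?; apply: lerXn2r; rewrite ?nnegrE; lra.
  by rewrite sumr_const card_ord mulr_natl.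
have [_ rate_le1] := andP rate_itv.
apply: le_lt_trans (window_potential_iter K) _.
apply: le_lt_trans (ler_wpM2l _ pot0_le) _; first by rewrite exprn_ge0 // subr_ge0.
apply: le_lt_trans (ler_wpM2r (ltW bound0_gt0) (expr_1B_le_expR K rate_itv)) _.
rewrite -ltr_pdivlMr //.
have -> : Q%:R^-1 ^+ 2 / (n%:R * (U - L) ^+ 2) = expR (- ln M).
  rewrite expRN lnK ?posrE // /M; field.
  by rewrite (gt_eqF UL_gt0) (gt_eqF Q_gt0R) addrC natr1 pnatr_eq0.
by rewrite ltr_expR ltrN2.
Qed.

(* On the grid, every point is either at the minimum or at distance >= 1/Q from it. *)
Lemma small_potential_consensus k :
  window_potential k < Q%:R^-1 ^+ 2 -> forall i, x (k * B)%N i = xmin (k * B).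
Proof.
move=> pot_small i; set t := (k * B)%N.
have := @xmin_le t i; rewrite le_eqVlt => /orP [/eqP -> //|lt_min].
have gap_ge : xmin t + Q%:R^-1 <= x t i.
  exact: on_grid_lt (@x_on_grid _ _) (@x_on_grid _ _) lt_min.
have sq_le : (x t i - xmin t) ^+ 2 <= window_potential k.
  rewrite /window_potential -/t /potential (bigD1 i) //= lerDl.
  by apply: sumr_ge0 => j _; exact: sqr_ge0.
have Qinv_gt0 : 0 < (Q%:R : R)^-1 by rewrite invr_gt0.
suff : Q%:R^-1 ^+ 2 <= (x t i - xmin t) ^+ 2 by lra.
by apply: lerXn2r; rewrite ?nnegrE; lra.
Qed.

Lemma consensus_stable t w : (forall i, x t i = w) -> forall d i, x (t + d)%N i = w.
Proof.
move=> x_eq; elim=> [|d IHd] i; first by rewrite addn0.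
rewrite addnS x_step (eq_bigr (fun j => A (t + d)%N i j * w)) => [|j _]; last by rewrite IHd.
by rewrite -mulr_suml A_row_sum mul1r -(x_eq ord0) rdown_id //; exact: x_on_grid.
Qed.

Lemma enough_windows (D : R) : (0 < n')%N -> 1 <= D ->
  exists K : nat, ln (n%:R * D ^+ 2) < K%:R * rate /\
    K%:R <= 6 * (n%:R ^+ 2 / eta) * ln (n%:R * D).
Proof.
move=> n'_gt0 D_ge1.
have n_ge2 : 2 <= n%:R :> R by rewrite (ler_nat R 2 n) ltnS.
set N := n%:R ^+ 2 / eta; set lnD := ln (n%:R * D).
have N_ge1 : 1 <= N.
  by rewrite ler_pdivlMr // mul1r (le_trans eta_le1) // exprn_ege1 // ler1n.
have lnD_ge : 1 / 2 <= lnD by rewrite ln_ge_half //; nra.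
have r_ge1 : 1 <= 2 * N * lnD by nra.
have [K /andP [K_lo K_hi]] := exists_nat_between r_ge1.
exists K; split; last by lra.
have rate_gt0 : 0 < rate by rewrite divr_gt0 // mulr_gt0 // exprn_gt0.
have two_lnD : 2 * (2 * N * lnD) * rate = 2 * lnD.
  by rewrite /N /rate; field; rewrite addrC natr1 pnatr_eq0 (gt_eqF eta_gt0).
have n_ge1 : 1 <= n%:R :> R by lra.
apply: le_lt_trans (ln_mul_sqr_le n_ge1 D_ge1) _.
by rewrite -two_lnD ltr_pM2r.
Qed.

Lemma quantized_consensus (U L : R) :
  (exists i j, x 0%N i != x 0%N j) ->
  (forall i, x 0%N i <= U) -> (exists i, x 0%N i = U) ->
  (forall i, L <= x 0%N i) -> (exists i, x 0%N i = L) ->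
  exists xf : R,
    (forall i, (fun k => x k i) @ \oo --> xf) /\
    `| xf - (\sum_(i < n) x 0%N i) / n%:R |
      <= 6 / Q%:R * (n%:R ^+ 2 / eta) * B%:R * ln (Q%:R * n%:R * (U - L)).
Proof.
move=> [i0 [j0 x0_neq]] le_xU [iU eU] le_Lx [iL eL].
have n'_gt0 : (0 < n')%N by apply: (@ord_neq_gt0 _ i0 j0); apply: contraNneq x0_neq => ->.
have lt_LU : L < U.
  rewrite lt_neqAle (le_trans (le_Lx i0) (le_xU i0)) andbT.
  apply: contraNneq x0_neq => eq_LU; apply/eqP.
  by have := le_Lx i0; have := le_xU i0; have := le_Lx j0; have := le_xU j0; lra.
have D_ge1 : 1 <= Q%:R * (U - L).
  by apply: on_grid_gap_ge lt_LU; [rewrite -eL | rewrite -eU]; exact: x_on_grid.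
have [K [ln_lt K_le]] := enough_windows n'_gt0 D_ge1.
have cons := small_potential_consensus
  (window_potential_small le_xU le_Lx (ex_intro _ iL eL) lt_LU ln_lt).
exists (xmin (K * B)); split.
  move=> i; apply: cvg_near_cst; apply: filterS (nbhs_infty_ge (K * B)%N) => k le_k.
  by rewrite -(subnKC le_k); exact: consensus_stable cons _ i.
have [sum_le sum_ge] := sum_x_iter (K * B).
have sum_eq : \sum_(i < n) x (K * B)%N i = n%:R * xmin (K * B).
  by rewrite (eq_bigr _ (fun i _ => cons i)) sumr_const card_ord mulr_natl.
rewrite sum_eq in sum_le sum_ge.
have n_gt0 : 0 < n%:R :> R by rewrite ltr0n.
apply: le_trans (dist_mean_le n_gt0 Q_gt0R (ler0n _ _) sum_le sum_ge) _.
have -> : (K * B)%:R / Q%:R = K%:R * (B%:R / Q%:R) :> R by rewrite natrM mulrA.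
have -> : 6 / Q%:R * (n%:R ^+ 2 / eta) * B%:R * ln (Q%:R * n%:R * (U - L)) =
    6 * (n%:R ^+ 2 / eta) * ln (n%:R * (Q%:R * (U - L))) * (B%:R / Q%:R).
  by rewrite (_ : Q%:R * n%:R * (U - L) = n%:R * (Q%:R * (U - L))); ring.
by apply: ler_wpM2r; [rewrite divr_ge0 | exact: K_le].
Qed.

End Dynamics.
End QuantizedConsensus.

Theorem proposition7 :
  exists c : R,
  forall (n : nat) (eta : R) (B Q : nat) (A : nat -> 'M[R]_n)
         (x : nat -> 'I_n -> R) (U L : R),
    0 < eta -> (1 <= B)%N -> (1 <= Q)%N ->
    (forall i, exists z : int, x 0%N i = z%:~R / Q%:R) ->
    (exists i j, x 0%N i != x 0%N j) ->
    (forall k i, x k.+1 i = rdown Q (\sum_(j < n) A k i j * x k j)) ->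
    (forall k, doubly_stochastic (A k)) ->
    (forall k i, 0 < A k i i) ->
    (forall k i j, 0 < A k i j -> eta <= A k i j) ->
    (* s is sigma, 0-indexed: a = d - 1 and b = d *)
    (forall (k : nat) (s : {perm 'I_n}),
       (forall a b : 'I_n, (a <= b)%N -> x (k * B)%N (s b) <= x (k * B)%N (s a)) ->
       forall a b : 'I_n, nat_of_ord b = a.+1 ->
         x (k * B)%N (s a) = x (k * B)%N (s b) \/
         exists t : nat, [/\ (k * B <= t)%N, (t < k.+1 * B)%N &
           exists p q : 'I_n, [/\ (p <= a)%N, (b <= q)%N &
             in_edges (A t) (s p) (s q) \/ in_edges (A t) (s q) (s p)]]) ->
    (forall i, x 0%N i <= U) -> (exists i, x 0%N i = U) ->
    (forall i, L <= x 0%N i) -> (exists i, x 0%N i = L) ->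
    exists xf : R,
      (forall i, (fun k => x k i) @ \oo --> xf) /\
      `| xf - (\sum_(i < n) x 0%N i) / n%:R |
        <= c / Q%:R * (n%:R ^+ 2 / eta) * B%:R * ln (Q%:R * n%:R * (U - L)).
Proof.
exists 6 => n eta B Q A x U L eta_gt0 _ Q_gt0 x0_grid x0_neq x_step A_ds A_diag A_eta
  gap_crossed le_xU eU le_Lx eL.
case: n A x x0_grid x0_neq x_step A_ds A_diag A_eta gap_crossed le_xU eU le_Lx eL
  => [|n'] A x x0_grid x0_neq x_step A_ds A_diag A_eta gap_crossed le_xU eU le_Lx eL.
  by case: x0_neq => [[]].
exact: (quantized_consensus Q_gt0 eta_gt0 x0_grid x_step A_ds A_diag A_eta gap_crossed
  x0_neq le_xU eU le_Lx eL).
Qed.
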